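(* Let $P : E \to B$ be a functor between finite categories which is both fibered in groupoids and cofibered in groupoids. Let $B = \coprod_i B_i$ be the decomposition of $B$ into connected components, and let $F_i$ be the fiber category $P^{-1}(b)$ over an object $b$ of $B_i$. If $E$ and each $B_i$ have Euler characteristics, then \[ \chi(E) = \sum_i \chi(B_i)\,\chi(F_i). \]
   Context: Matrices and Euler characteristic: for finite sets $I,J$ and $\zeta : I\times J \to \mathbb{Q}$, a weighting is $k^{\bullet} : J \to \mathbb{Q}$ with $\sum_j \zeta(i,j)k^j = 1$ for all $i$; a coweighting is $k_{\bullet} : I\to\mathbb{Q}$ with $\sum_i k_i\zeta(i,j)=1$ for all $j$. $\zeta$ has Euler characteristic if it has both, and then $|\zeta| = \sum_j k^j = \sum_i k_i$. A finite category $A$ has similarity matrix $\zeta_A(x,y) = \#A(x,y)$; $A$ has Euler characteristic if $\zeta_A$ does, and $\chi(A) = |\zeta_A|$. A morphism $f : e \to e'$ in $E$ is cartesian if for every $g : e'' \to e'$ and every $h : P(e'') \to P(e)$ with $P(f)\circ h = P(g)$ there is a unique $\tilde h : e'' \to e$ with $P(\tilde h) = h$ and $f\circ\tilde h = g$. $P$ is fibered in groupoids if every morphism of $E$ is cartesian and every morphism $f : b \to P(e)$ in $B$ has a lift $\tilde f : e' \to e$ with $P(\tilde f)=f$; cofibered in groupoids is the dual notion. The fiber category $P^{-1}(b)$ has objects $e$ with $P(e)=b$ and morphisms $f$ with $P(f)=\mathrm{id}_b$; over a connected component all fibers are equivalent. *)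

From HB Require Import structures.
From mathcomp Require Import all_boot all_order all_algebra.
Set Implicit Arguments. Unset Strict Implicit. Unset Printing Implicit Defensive.
Import Order.TTheory GRing.Theory Num.Theory.
Local Open Scope ring_scope.

(* Euler characteristic of a matrix zeta : I x J -> Q, where the index sets
   are given as finite subsets I of T and J of U.  [has_euler I J zeta c]
   means: zeta has a weighting and a coweighting, and |zeta| = c (the sum of
   the weighting, which equals the sum of any coweighting). *)
Definition is_weighting (T U : finType) (I : {set T}) (J : {set U})
  (zeta : T -> U -> rat) (k : U -> rat) : Prop :=
  forall i, i \in I -> \sum_(j in J) zeta i j * k j = 1.

Definition is_coweighting (T U : finType) (I : {set T}) (J : {set U})
  (zeta : T -> U -> rat) (k : T -> rat) : Prop :=
  forall j, j \in J -> \sum_(i in I) k i * zeta i j = 1.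

Definition has_euler (T U : finType) (I : {set T}) (J : {set U})
  (zeta : T -> U -> rat) (c : rat) : Prop :=
  (exists k : U -> rat, is_weighting I J zeta k /\ \sum_(j in J) k j = c) /\
  (exists k : T -> rat, is_coweighting I J zeta k).

(* A finite category, in one-sorted presentation: finite type of objects,
   finite type of all morphisms, domain/codomain, identities, composition
   ([comp f g] = f o g, meaningful when dom f = cod g). *)
Record fincat := FinCat {
  Obj : finType;
  Mor : finType;
  dom : Mor -> Obj;
  cod : Mor -> Obj;
  idm : Obj -> Mor;
  comp : Mor -> Mor -> Mor;
  dom_id : forall x, dom (idm x) = x;
  cod_id : forall x, cod (idm x) = x;
  dom_comp : forall f g, dom f = cod g -> dom (comp f g) = dom g;
  cod_comp : forall f g, dom f = cod g -> cod (comp f g) = cod f;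
  comp_id_l : forall f, comp (idm (cod f)) f = f;
  comp_id_r : forall f, comp f (idm (dom f)) = f;
  comp_assoc : forall f g h, dom f = cod g -> dom g = cod h ->
    comp f (comp g h) = comp (comp f g) h
}.

Definition homset (A : fincat) (x y : Obj A) : {set Mor A} :=
  [set f | (dom f == x) && (cod f == y)].

Definition zeta_cat (A : fincat) (x y : Obj A) : rat := (#|homset x y|)%:R.

Definition cat_euler (A : fincat) (c : rat) : Prop :=
  has_euler [set: Obj A] [set: Obj A] (@zeta_cat A) c.

Record functor (E B : fincat) := Functor {
  fobj : Obj E -> Obj B;
  fmor : Mor E -> Mor B;
  fmor_dom : forall f, dom (fmor f) = fobj (dom f);
  fmor_cod : forall f, cod (fmor f) = fobj (cod f);
  fmor_id : forall x, fmor (idm x) = idm (fobj x);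
  fmor_comp : forall f g, dom f = cod g -> fmor (comp f g) = comp (fmor f) (fmor g)
}.

Section Fib.
Variables (E B : fincat) (P : functor E B).

Definition cartesian (f : Mor E) : Prop :=
  forall (g : Mor E) (h : Mor B),
    cod g = cod f ->
    dom h = fobj P (dom g) -> cod h = fobj P (dom f) ->
    comp (fmor P f) h = fmor P g ->
    exists th : Mor E,
      [/\ dom th = dom g, cod th = dom f, fmor P th = h, comp f th = g &
        forall th' : Mor E, dom th' = dom g -> cod th' = dom f ->
          fmor P th' = h -> comp f th' = g -> th' = th].

Definition cocartesian (f : Mor E) : Prop :=
  forall (g : Mor E) (h : Mor B),
    dom g = dom f ->
    dom h = fobj P (cod f) -> cod h = fobj P (cod g) ->
    comp h (fmor P f) = fmor P g ->
    exists th : Mor E,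
      [/\ dom th = cod f, cod th = cod g, fmor P th = h, comp th f = g &
        forall th' : Mor E, dom th' = cod f -> cod th' = cod g ->
          fmor P th' = h -> comp th' f = g -> th' = th].

Definition fibered_in_groupoids : Prop :=
  (forall f : Mor E, cartesian f) /\
  (forall (e : Obj E) (f : Mor B), cod f = fobj P e ->
     exists tf : Mor E, cod tf = e /\ fmor P tf = f).

Definition cofibered_in_groupoids : Prop :=
  (forall f : Mor E, cocartesian f) /\
  (forall (e : Obj E) (f : Mor B), dom f = fobj P e ->
     exists tf : Mor E, dom tf = e /\ fmor P tf = f).

Definition fiber_obj (b : Obj B) : {set Obj E} := [set e | fobj P e == b].

Definition zeta_fiber (b : Obj B) (e e' : Obj E) : rat :=
  (#|[set f in homset e e' | fmor P f == idm b]|)%:R.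

End Fib.

Definition adjacent (B : fincat) : rel (Obj B) :=
  fun x y => [exists f : Mor B,
    ((dom f == x) && (cod f == y)) || ((dom f == y) && (cod f == x))].

Definition component (B : fincat) (b : Obj B) : {set Obj B} :=
  [set y | connect (@adjacent B) b y].

Definition components (B : fincat) : {set {set Obj B}} :=
  [set component b | b : Obj B].

(* chi(B_C) = c for the full subcategory on the component C *)
Definition component_euler (B : fincat) (C : {set Obj B}) (c : rat) : Prop :=
  has_euler C C (@zeta_cat B) c.

Definition fiber_euler (E B : fincat) (P : functor E B) (b : Obj B) (c : rat)
  : Prop := has_euler (fiber_obj P b) (fiber_obj P b) (zeta_fiber P b) c.

(* A vertical morphism is both cartesian and cocartesian, so its cartesian
   lift of the identity is a two-sided inverse: every fiber is a groupoid.
   In a groupoid the number of morphisms out of (into) x is an isomorphism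
   invariant, so its reciprocal is a weighting (coweighting) of the fiber.
   Counting the morphisms of E over h : b -> b' through a cocartesian lift at
   the source, and through a cartesian lift at the target, shows that
   chi(P^-1 b) = chi(P^-1 b'), so the fiber Euler characteristic is constant
   on components.  Finally, for a weighting k of B, e |-> k (P e) / #(vertical
   morphisms out of e) is a weighting of E, whose total is
   sum_b k b * chi(P^-1 b) = sum_i chi(B_i) chi(F_i). *)

From Pilot Require Import Defs.
From HB Require Import structures.
From mathcomp Require Import all_boot all_order all_algebra.
From Stdlib Require Import ClassicalEpsilon.
Import Pilot.Defs.
Set Implicit Arguments. Unset Strict Implicit. Unset Printing Implicit Defensive.
Import Order.TTheory GRing.Theory Num.Theory.
Local Open Scope ring_scope.

Lemma weighting_sum_eq_coweighting_sum (T U : finType) (I : {set T}) (J : {set U})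
    (zeta : T -> U -> rat) (k : U -> rat) (c : T -> rat) :
  is_weighting I J zeta k -> is_coweighting I J zeta c ->
  \sum_(j in J) k j = \sum_(i in I) c i.
Proof.
move=> wk cwc.
rewrite (eq_bigr (fun j => (\sum_(i in I) c i * zeta i j) * k j)); last first.
  by move=> j hj; rewrite cwc // mul1r.
under eq_bigr do rewrite big_distrl /=.
rewrite exchange_big /=; apply: eq_bigr => i hi.
by under eq_bigr do rewrite -mulrA; rewrite -big_distrr /= wk // mulr1.
Qed.

Lemma comp_id_l_eq (A : fincat) (f : Mor A) y : cod f = y -> comp (idm y) f = f.
Proof. by move=> <-; rewrite comp_id_l. Qed.

Lemma comp_id_r_eq (A : fincat) (f : Mor A) y : dom f = y -> comp f (idm y) = f.
Proof. by move=> <-; rewrite comp_id_r. Qed.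

Lemma comp_idm_idm (A : fincat) (x : Obj A) : comp (idm x) (idm x) = idm x.
Proof. by apply: comp_id_l_eq; rewrite cod_id. Qed.

Section Components.
Variable B : fincat.

Lemma adjacent_sym : symmetric (@adjacent B).
Proof. by move=> x y; apply/existsP/existsP => -[f hf]; exists f; rewrite orbC. Qed.

Lemma mem_component (b : Obj B) : b \in component b.
Proof. by rewrite inE connect0. Qed.

Lemma component_in_components (b : Obj B) : component b \in components B.
Proof. by apply/imsetP; exists b. Qed.

Lemma component_eq (x y : Obj B) : y \in component x -> component y = component x.
Proof.
rewrite inE => xy; apply/setP => z; rewrite !inE.
by rewrite (same_connect (sym_connect_sym adjacent_sym) xy).
Qed.

Lemma cod_in_component (f : Mor B) : cod f \in component (dom f).
Proof. by rewrite inE connect1 //; apply/existsP; exists f; rewrite !eqxx. Qed.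

Lemma component_of_mem (C : {set Obj B}) (b : Obj B) :
  C \in components B -> b \in C -> component b = C.
Proof. by case/imsetP=> b0 _ -> /component_eq. Qed.

Lemma sum_by_components (F : Obj B -> rat) :
  \sum_(b in [set: Obj B]) F b = \sum_(C in components B) \sum_(b in C) F b.
Proof.
rewrite (partition_big (@component B) (mem (components B))) /=; last first.
  by move=> b _; exact: component_in_components.
apply: eq_bigr => C hC; apply: eq_bigl => b; rewrite in_setT /=.
apply/eqP/idP => [<-|]; first exact: mem_component.
exact: component_of_mem.
Qed.

Lemma component_invariant (F : Obj B -> rat) :
  (forall h : Mor B, F (dom h) = F (cod h)) ->
  forall C x y, C \in components B -> x \in C -> y \in C -> F x = F y.
Proof.
move=> Fh C x y hC xC yC.
have: y \in component x by rewrite (component_of_mem hC xC).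
rewrite inE => /connectP[p]; elim: p x {xC} => [|z p IHp] x /=; first by move=> _ ->.
case/andP=> /existsP[f] /orP[] /andP[/eqP <- /eqP <-] pz ey; rewrite -(IHp _ pz ey) //.
Qed.

(* Weightings of the components assemble into a weighting of B, because
   there are no morphisms between distinct components. *)
Lemma glue_component_weightings (chiB : {set Obj B} -> rat) :
  (forall C, C \in components B -> component_euler C (chiB C)) ->
  exists kB : Obj B -> rat,
    is_weighting [set: Obj B] [set: Obj B] (@zeta_cat B) kB /\
    forall C, C \in components B -> \sum_(b in C) kB b = chiB C.
Proof.
move=> hB.
have wC C : exists k : Obj B -> rat, C \in components B ->
    is_weighting C C (@zeta_cat B) k /\ \sum_(b in C) k b = chiB C.
  case: (boolP (C \in components B)) => hC; last by exists (fun=> 0).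
  by have [[k hk] _] := hB C hC; exists k.
pose kC C := proj1_sig (constructive_indefinite_description _ (wC C)).
have kCP C : C \in components B ->
    is_weighting C C (@zeta_cat B) (kC C) /\ \sum_(b in C) kC C b = chiB C.
  exact: proj2_sig (constructive_indefinite_description _ (wC C)).
exists (fun b => kC (component b) b); split; last first.
  move=> C hC; rewrite -(kCP C hC).2; apply: eq_bigr => b bC.
  by rewrite (component_of_mem hC bC).
move=> x _; have hx := component_in_components x.
rewrite -((kCP _ hx).1 x (mem_component x)) big_mkcond [RHS]big_mkcond.
apply: eq_bigr => y _; rewrite in_setT.
case: ifP => [/component_eq -> //| yx].
case: (set_0Vmem (homset x y)) => [hom0|[f]]; first by rewrite /zeta_cat hom0 cards0 mul0r.
by rewrite inE => /andP[/eqP fx /eqP fy]; move: (cod_in_component f); rewrite fx fy yx.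
Qed.

End Components.

Section Fibration.
Variables (E B : fincat) (P : functor E B).

Lemma vertical_dom (f : Mor E) b : fmor P f = idm b -> fobj P (dom f) = b.
Proof. by move=> fb; rewrite -fmor_dom fb dom_id. Qed.

Lemma vertical_cod (f : Mor E) b : fmor P f = idm b -> fobj P (cod f) = b.
Proof. by move=> fb; rewrite -fmor_cod fb cod_id. Qed.

Definition fiber_hom (b : Obj B) (x y : Obj E) : {set Mor E} :=
  [set f in homset x y | fmor P f == idm b].

Definition hom_over (h : Mor B) (x y : Obj E) : {set Mor E} :=
  [set f in homset x y | fmor P f == h].

Definition fiber_out (x : Obj E) : {set Mor E} :=
  [set f | (dom f == x) && (fmor P f == idm (fobj P x))].

Definition fiber_in (x : Obj E) : {set Mor E} :=
  [set f | (cod f == x) && (fmor P f == idm (fobj P x))].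

Lemma fiber_out_gt0 x : (0 < #|fiber_out x|)%N.
Proof. by apply/card_gt0P; exists (idm x); rewrite !inE dom_id fmor_id !eqxx. Qed.

Lemma fiber_in_gt0 x : (0 < #|fiber_in x|)%N.
Proof. by apply/card_gt0P; exists (idm x); rewrite !inE cod_id fmor_id !eqxx. Qed.

Lemma card_fiber_out b x : fobj P x = b ->
  #|fiber_out x| = (\sum_(y in fiber_obj P b) #|fiber_hom b x y|)%N.
Proof.
move=> xb; rewrite -sum1_card (partition_big (@cod E) (mem (fiber_obj P b))) /=.
  apply: eq_bigr => y _; rewrite -sum1_card; apply: eq_bigl => f.
  by rewrite !inE xb; do !case: eqP.
by move=> f; rewrite !inE xb => /andP[_ /eqP/vertical_cod ->].
Qed.

Lemma card_fiber_in b y : fobj P y = b ->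
  #|fiber_in y| = (\sum_(x in fiber_obj P b) #|fiber_hom b x y|)%N.
Proof.
move=> yb; rewrite -sum1_card (partition_big (@dom E) (mem (fiber_obj P b))) /=.
  apply: eq_bigr => x _; rewrite -sum1_card; apply: eq_bigl => f.
  by rewrite !inE yb; do !case: eqP.
by move=> f; rewrite !inE yb => /andP[_ /eqP/vertical_dom ->].
Qed.

Lemma card_homset_over (x y : Obj E) :
  #|homset x y| = (\sum_(h in homset (fobj P x) (fobj P y)) #|hom_over h x y|)%N.
Proof.
rewrite -sum1_card (partition_big (fmor P) (mem (homset (fobj P x) (fobj P y)))) /=.
  by apply: eq_bigr => h _; rewrite -sum1_card; apply: eq_bigl => f; rewrite !inE.
move=> f; rewrite !inE => /andP[/eqP fx /eqP fy].
by rewrite fmor_dom fmor_cod fx fy !eqxx.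
Qed.


Hypothesis fibP : fibered_in_groupoids P.
Hypothesis cofibP : cofibered_in_groupoids P.

Lemma vertical_inverse (f : Mor E) b : fmor P f = idm b ->
  exists g, [/\ dom g = cod f, cod g = dom f, fmor P g = idm b,
     comp f g = idm (cod f) & comp g f = idm (dom f)].
Proof.
move=> fb; have fd := vertical_dom fb; have fc := vertical_cod fb.
have [g [gd gc gb gr _]] := fibP.1 f (idm (cod f)) (idm b)
  (cod_id _) ltac:(by rewrite dom_id dom_id fc) ltac:(by rewrite cod_id fd)
  ltac:(by rewrite fb comp_idm_idm fmor_id fc).
have [g' [gd' gc' gb' gl' _]] := cofibP.1 f (idm (dom f)) (idm b)
  (dom_id _) ltac:(by rewrite dom_id fc) ltac:(by rewrite cod_id cod_id fd)
  ltac:(by rewrite fb comp_idm_idm fmor_id fd).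
rewrite dom_id in gd; rewrite cod_id in gc'.
have gg' : g = g'.
  by rewrite -[g'](comp_id_r_eq (y := cod f)) // -gr comp_assoc // gl' comp_id_l_eq.
by exists g; split => //; rewrite gg'.
Qed.

Lemma card_fiber_out_in_le (f : Mor E) b : fmor P f = idm b ->
  (#|fiber_out (cod f)| <= #|fiber_out (dom f)|)%N /\
  (#|fiber_in (dom f)| <= #|fiber_in (cod f)|)%N.
Proof.
move=> fb; have fd := vertical_dom fb; have fc := vertical_cod fb.
have [g [gd gc _ fg gf]] := vertical_inverse fb.
split.
- have inj : {in fiber_out (cod f) &, injective (fun h => comp h f)}.
    move=> h1 h2; rewrite !inE => /andP[/eqP d1 _] /andP[/eqP d2 _] e.
    rewrite -(comp_id_r_eq (f := h1) d1) -(comp_id_r_eq (f := h2) d2) -fg.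
    by rewrite !comp_assoc ?e ?gc.
  rewrite -(card_in_imset inj); apply: subset_leq_card.
  apply/subsetP => _ /imsetP[h + ->]; rewrite !inE => /andP[/eqP hd /eqP hb].
  by rewrite dom_comp // fmor_comp // hb fb fc fd comp_idm_idm !eqxx.
- have inj : {in fiber_in (dom f) &, injective (fun h => comp f h)}.
    move=> h1 h2; rewrite !inE => /andP[/eqP c1 _] /andP[/eqP c2 _] e.
    rewrite -(comp_id_l_eq (f := h1) c1) -(comp_id_l_eq (f := h2) c2) -gf.
    by rewrite -!comp_assoc ?e ?gd.
  rewrite -(card_in_imset inj); apply: subset_leq_card.
  apply/subsetP => _ /imsetP[h + ->]; rewrite !inE => /andP[/eqP hc /eqP hb].
  by rewrite cod_comp // fmor_comp // hb fb fc fd comp_idm_idm !eqxx.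
Qed.

Lemma card_fiber_out_in_eq (f : Mor E) b : fmor P f = idm b ->
  #|fiber_out (dom f)| = #|fiber_out (cod f)| /\
  #|fiber_in (dom f)| = #|fiber_in (cod f)|.
Proof.
move=> fb; have [g [gd gc gb _ _]] := vertical_inverse fb.
have [le1 le2] := card_fiber_out_in_le fb.
have [le1' le2'] := card_fiber_out_in_le gb; rewrite gd gc in le1' le2'.
by split; apply/eqP; rewrite eqn_leq ?le1 ?le2 ?le1' ?le2'.
Qed.

Definition fiber_wt (x : Obj E) : rat := (#|fiber_out x|%:R)^-1.

Definition fiber_cowt (x : Obj E) : rat := (#|fiber_in x|%:R)^-1.

Lemma fiber_wt_weighting b :
  is_weighting (fiber_obj P b) (fiber_obj P b) (zeta_fiber P b) fiber_wt.
Proof.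
move=> x; rewrite inE => /eqP xb.
rewrite (eq_bigr (fun y => #|fiber_hom b x y|%:R * fiber_wt x)).
  by rewrite -big_distrl /= -natr_sum -card_fiber_out // mulfV // pnatr_eq0 -lt0n fiber_out_gt0.
move=> y _; rewrite /zeta_fiber -/(fiber_hom b x y).
case: (set_0Vmem (fiber_hom b x y)) => [-> | [f]]; first by rewrite cards0 !mul0r.
rewrite !inE => /andP[/andP[/eqP <- /eqP <-] /eqP fb].
by rewrite /fiber_wt (card_fiber_out_in_eq fb).1.
Qed.

Lemma fiber_cowt_coweighting b :
  is_coweighting (fiber_obj P b) (fiber_obj P b) (zeta_fiber P b) fiber_cowt.
Proof.
move=> y; rewrite inE => /eqP yb.
rewrite (eq_bigr (fun x => fiber_cowt y * #|fiber_hom b x y|%:R)).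
  by rewrite -big_distrr /= -natr_sum -card_fiber_in // mulVf // pnatr_eq0 -lt0n fiber_in_gt0.
move=> x _; rewrite /zeta_fiber -/(fiber_hom b x y).
case: (set_0Vmem (fiber_hom b x y)) => [-> | [f]]; first by rewrite cards0 !mulr0.
rewrite !inE => /andP[/andP[/eqP <- /eqP <-] /eqP fb].
by rewrite /fiber_cowt (card_fiber_out_in_eq fb).2.
Qed.

(* Precomposition with a cocartesian lift [phi : e -> e1] of [h] is a
   bijection from the fiber hom-set [(e1, e')] onto the morphisms over [h]. *)
Lemma card_hom_over_cocart (h : Mor B) (e : Obj E) : dom h = fobj P e ->
  exists e1, fobj P e1 = cod h /\ forall e', fobj P e' = cod h ->
    #|hom_over h e e'| = #|fiber_hom (cod h) e1 e'|.
Proof.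
move=> he; have [phi [phid phih]] := cofibP.2 e h he.
have phic : fobj P (cod phi) = cod h by rewrite -fmor_cod phih.
exists (cod phi); split => // e' he'.
have inj : {in fiber_hom (cod h) (cod phi) e' &, injective (fun t => comp t phi)}.
  move=> t1 t2; rewrite !inE => /andP[/andP[/eqP d1 /eqP c1] /eqP q1]
     /andP[/andP[/eqP d2 /eqP c2] /eqP q2] t12.
  have [t0 [_ _ _ _ uniq_t0]] := cofibP.1 phi (comp t1 phi) (idm (cod h))
    ltac:(by rewrite dom_comp) ltac:(by rewrite dom_id phic)
    ltac:(by rewrite cod_id cod_comp // c1 he') ltac:(by rewrite fmor_comp // q1 phih).
  have t1c : cod (comp t1 phi) = e' by rewrite cod_comp.
  by rewrite (uniq_t0 t1) ?t1c // (uniq_t0 t2) ?t1c.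
rewrite -(card_in_imset inj); apply/esym/eq_card => f; apply/imsetP/idP.
- case=> t; rewrite !inE => /andP[/andP[/eqP d1 /eqP c1] /eqP q1] ->.
  by rewrite dom_comp // cod_comp // phid c1 fmor_comp // q1 phih comp_id_l_eq // !eqxx.
- rewrite !inE => /andP[/andP[/eqP fd /eqP fc] /eqP fh].
  have [t [td tc tb tf _]] := cofibP.1 phi f (idm (cod h))
    ltac:(by rewrite fd) ltac:(by rewrite dom_id phic) ltac:(by rewrite cod_id fc he')
    ltac:(by rewrite phih fh comp_id_l_eq).
  by exists t; rewrite ?tf // !inE td tc tb fc !eqxx.
Qed.

Lemma card_hom_over_cart (h : Mor B) (e' : Obj E) : cod h = fobj P e' ->
  exists e2, fobj P e2 = dom h /\ forall e, fobj P e = dom h ->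
    #|hom_over h e e'| = #|fiber_hom (dom h) e e2|.
Proof.
move=> he'; have [psi [psic psih]] := fibP.2 e' h he'.
have psid : fobj P (dom psi) = dom h by rewrite -fmor_dom psih.
exists (dom psi); split => // e he.
have inj : {in fiber_hom (dom h) e (dom psi) &, injective (fun t => comp psi t)}.
  move=> t1 t2; rewrite !inE => /andP[/andP[/eqP d1 /eqP c1] /eqP q1]
     /andP[/andP[/eqP d2 /eqP c2] /eqP q2] t12.
  have [t0 [_ _ _ _ uniq_t0]] := fibP.1 psi (comp psi t1) (idm (dom h))
    ltac:(by rewrite cod_comp) ltac:(by rewrite dom_id dom_comp // d1 he)
    ltac:(by rewrite cod_id psid) ltac:(by rewrite fmor_comp // q1 psih).
  have t1d : dom (comp psi t1) = e by rewrite dom_comp.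
  by rewrite (uniq_t0 t1) ?t1d // (uniq_t0 t2) ?t1d.
rewrite -(card_in_imset inj); apply/esym/eq_card => f; apply/imsetP/idP.
- case=> t; rewrite !inE => /andP[/andP[/eqP d1 /eqP c1] /eqP q1] ->.
  by rewrite dom_comp // cod_comp // psic d1 fmor_comp // q1 psih comp_id_r_eq // !eqxx.
- rewrite !inE => /andP[/andP[/eqP fd /eqP fc] /eqP fh].
  have [t [td tc tb tf _]] := fibP.1 psi f (idm (dom h))
    ltac:(by rewrite fc) ltac:(by rewrite dom_id fd he) ltac:(by rewrite cod_id psid)
    ltac:(by rewrite psih fh comp_id_r_eq).
  by exists t; rewrite ?tf // !inE td tc tb fd !eqxx.
Qed.

Definition fiber_chi (b : Obj B) : rat := \sum_(e in fiber_obj P b) fiber_wt e.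

Lemma fiber_chi_euler b : fiber_euler P b (fiber_chi b).
Proof.
split; first by exists fiber_wt; split => //; exact: fiber_wt_weighting.
by exists fiber_cowt; exact: fiber_cowt_coweighting.
Qed.

Lemma sum_hom_over_fiber_wt (h : Mor B) (e : Obj E) : fobj P e = dom h ->
  \sum_(e' in fiber_obj P (cod h)) #|hom_over h e e'|%:R * fiber_wt e' = 1.
Proof.
move=> eh; have [e1 [e1h card_e1]] := card_hom_over_cocart (esym eh).
rewrite -[RHS](@fiber_wt_weighting (cod h) e1) ?inE ?e1h //; apply: eq_bigr => e'.
by rewrite inE => /eqP/card_e1 ->.
Qed.

(* Both sides equal [sum_(e over dom h, e' over cod h) cowt e * #(e -h-> e') * wt e']:
   sum over [e'] first using the cocartesian lift, over [e] first using the
   cartesian one. *)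
Lemma fiber_chi_dom_cod (h : Mor B) : fiber_chi (dom h) = fiber_chi (cod h).
Proof.
transitivity (\sum_(e in fiber_obj P (dom h)) \sum_(e' in fiber_obj P (cod h))
    fiber_cowt e * #|hom_over h e e'|%:R * fiber_wt e').
  rewrite /fiber_chi (weighting_sum_eq_coweighting_sum (fiber_wt_weighting (b := dom h))
    (fiber_cowt_coweighting (b := dom h))).
  apply: eq_bigr => e; rewrite inE => /eqP eh.
  by under eq_bigr do rewrite -mulrA; rewrite -big_distrr /= (sum_hom_over_fiber_wt eh) mulr1.
rewrite exchange_big; apply: eq_bigr => e'; rewrite inE => /eqP e'h.
have [e2 [e2h card_e2]] := card_hom_over_cart (esym e'h).
rewrite -big_distrl /= -[RHS]mul1r; congr (_ * _).
rewrite -[RHS](@fiber_cowt_coweighting (dom h) e2) ?inE ?e2h //; apply: eq_bigr => e.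
by rewrite inE => /eqP/card_e2 ->.
Qed.

Lemma total_weighting (kB : Obj B -> rat) :
  is_weighting [set: Obj B] [set: Obj B] (@zeta_cat B) kB ->
  is_weighting [set: Obj E] [set: Obj E] (@zeta_cat E)
    (fun e => kB (fobj P e) * fiber_wt e).
Proof.
move=> wB x _; rewrite -(wB (fobj P x)) ?in_setT //.
rewrite (partition_big (fobj P) (mem [set: Obj B])) /=; last by move=> *; rewrite in_setT.
apply: eq_bigr => b _.
rewrite (eq_bigl (fun e => e \in fiber_obj P b)); last by move=> e; rewrite !inE.
rewrite (eq_bigr (fun e => \sum_(h in homset (fobj P x) b)
    kB b * (#|hom_over h x e|%:R * fiber_wt e))); last first.
  move=> e; rewrite inE => /eqP <-.
  rewrite /zeta_cat card_homset_over natr_sum big_distrl /=.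
  by apply: eq_bigr => h _; rewrite mulrCA.
rewrite exchange_big /= (eq_bigr (fun=> kB b)) ?sumr_const /zeta_cat ?mulr_natl //.
move=> h; rewrite inE => /andP[/eqP hx /eqP hb].
by rewrite -big_distrr /= -hb (sum_hom_over_fiber_wt (esym hx)) mulr1.
Qed.

Lemma sum_total_weighting (kB : Obj B -> rat) :
  \sum_(e in [set: Obj E]) kB (fobj P e) * fiber_wt e =
  \sum_(b in [set: Obj B]) kB b * fiber_chi b.
Proof.
rewrite (partition_big (fobj P) (mem [set: Obj B])) /=; last by move=> *; rewrite in_setT.
apply: eq_bigr => b _; rewrite /fiber_chi big_distrr /=.
rewrite (eq_bigl (fun e => e \in fiber_obj P b)); last by move=> e; rewrite !inE.
by apply: eq_bigr => e; rewrite inE => /eqP ->.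
Qed.

End Fibration.

Unset Implicit Arguments.

Theorem corollary2p10 (E B : fincat) (P : functor E B)
  (hfib : fibered_in_groupoids P) (hcofib : cofibered_in_groupoids P)
  (chiE : rat) (chiB : {set Obj B} -> rat)
  (hE : cat_euler E chiE)
  (hB : forall C, C \in components B -> component_euler C (chiB C))
  (rep : {set Obj B} -> Obj B)
  (hrep : forall C, C \in components B -> rep C \in C) :
  exists chiF : {set Obj B} -> rat,
    (forall C, C \in components B -> fiber_euler P (rep C) (chiF C)) /\
    chiE = \sum_(C in components B) chiB C * chiF C.
Proof.
exists (fun C => fiber_chi P (rep C)); split=> [C _|]; first exact: fiber_chi_euler.
have [kB [wB sum_kB]] := glue_component_weightings hB.
have [[kE [wE <-]] [cE cwE]] := hE.
rewrite (weighting_sum_eq_coweighting_sum wE cwE).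
rewrite -(weighting_sum_eq_coweighting_sum (total_weighting hfib hcofib wB) cwE).
rewrite sum_total_weighting sum_by_components; apply: eq_bigr => C hC.
rewrite -sum_kB // big_distrl /=; apply: eq_bigr => b bC; congr (_ * _).
exact: component_invariant (fiber_chi_dom_cod hfib hcofib) C b (rep C) hC bC (hrep C hC).
Qed.
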